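(* Let $\mathbf{C}$ be the Cantor set, let $X \subset \mathbf{C}$, and let $f : X \to Y$ be a function from $X$ onto a separable metrizable space $Y$. Assume that $f$ is clopen-LC, and that $f^{-1}(y)$ is compact for every $y \in Y$. Then there are subsets $Y_0, Y_1, Y_2, \dots$ of $Y$ with $Y = \bigcup_{n \ge 0} Y_n$ such that: - for every $n \ge 1$, the restriction $f|_{f^{-1}(Y_n)} : f^{-1}(Y_n) \to Y_n$ is an open function; - the restriction $f|_{f^{-1}(Y_0)} : f^{-1}(Y_0) \to Y_0$ is a closed function.
   Context: All spaces are separable metrizable. A subset of a topological space is an LC-set (locally closed set) if it is the intersection of an open set and a closed set. A function $f$ (not necessarily continuous) is open (resp. closed) if it maps open (resp. closed) sets to open (resp. closed) sets of its image space. A function $f : X \to Y$ is clopen-LC if for every subset $U \subset X$ that is clopen in $X$, the image $f(U)$ is an LC-set in $Y$. *)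

From Stdlib Require Import Reals List.
Open Scope R_scope.

Definition set (T : Type) := T -> Prop.

(* The Cantor set, realized as the Cantor space 2^N with the product topology
   (homeomorphic to the middle-thirds Cantor set). *)
Definition Cantor := nat -> bool.

Definition agree (n : nat) (a b : Cantor) : Prop :=
  forall i, (i < n)%nat -> a i = b i.

Definition cantor_open (U : set Cantor) : Prop :=
  forall x, U x -> exists n, forall y, agree n x y -> U y.

Record MetricSpace := {
  carrier :> Type;
  dist : carrier -> carrier -> R;
  dist_nonneg : forall x y, 0 <= dist x y;
  dist_eq0 : forall x y, dist x y = 0 <-> x = y;
  dist_sym : forall x y, dist x y = dist y x;
  dist_tri : forall x y z, dist x z <= dist x y + dist y z
}.

Definition metric_open (Y : MetricSpace) (U : set Y) : Prop :=
  forall y, U y -> exists eps, 0 < eps /\ forall z, dist Y y z < eps -> U z.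

Definition separable (Y : MetricSpace) : Prop :=
  exists s : nat -> Y, forall y eps, 0 < eps -> exists n, dist Y y (s n) < eps.

Definition top_closed {T} (op : set T -> Prop) (F : set T) : Prop :=
  op (fun x => ~ F x).

Definition rel_open {T} (op : set T -> Prop) (A U : set T) : Prop :=
  (forall x, U x -> A x) /\
  exists V, op V /\ forall x, A x -> (U x <-> V x).

Definition rel_closed {T} (op : set T -> Prop) (A F : set T) : Prop :=
  (forall x, F x -> A x) /\
  exists C, top_closed op C /\ forall x, A x -> (F x <-> C x).

Definition rel_clopen {T} (op : set T -> Prop) (A U : set T) : Prop :=
  rel_open op A U /\ rel_closed op A U.

Definition LC_set {T} (op : set T -> Prop) (S : set T) : Prop :=
  exists U F, op U /\ top_closed op F /\ forall x, S x <-> (U x /\ F x).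

Definition top_compact {T} (op : set T -> Prop) (K : set T) : Prop :=
  forall (I : Type) (V : I -> set T),
    (forall i, op (V i)) ->
    (forall x, K x -> exists i, V i x) ->
    exists l : list I, forall x, K x -> exists i, In i l /\ V i x.

Definition img {A B} (f : A -> B) (U : set A) : set B :=
  fun y => exists x, U x /\ f x = y.

Definition preim {A B} (X : set A) (f : A -> B) (S : set B) : set A :=
  fun x => X x /\ S (f x).

(* Enumerate the finite unions [W] of basic cylinders of [2^N]. For each [W], the set
   [K_W = X \ W] is clopen in [X]; let [Z_W] be the remainder [cl f(K_W) \ f(K_W)].
   Over [Z_W] the map [f] is open: for [x] and a cylinder [N] around [x], the image of
   the clopen set [K_W ∪ (X ∩ N)] is an LC-set [O ∩ F]; every point of [O ∩ Z_W] lies in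
   [cl f(K_W) ⊆ F] but not in [f(K_W)], so it is the image of a point of [N].
   Over [Y_0 = Y \ ⋃_W Z_W] the map [f] is closed: if [y ∈ Y_0] lies in the closure of
   [f(F)] with [F ⊆ C] closed but [y ∉ f(F)], cover the compact fibre of [y] by finitely
   many cylinders [W] missing [C]; then [F ⊆ K_W] and [f^{-1}(y) ⊆ W] put [y] in [Z_W]. *)
From Stdlib Require Import Reals List.
From Stdlib Require Import Classical ClassicalEpsilon Lia Cantor.

Fixpoint encode_list {A} (g : A -> nat) (l : list A) : nat :=
  match l with
  | nil => 0
  | a :: l => S (Cantor.to_nat (g a, encode_list g l))
  end.

Lemma encode_list_inj {A} (g : A -> nat) :
  (forall a b, g a = g b -> a = b) ->
  forall l1 l2, encode_list g l1 = encode_list g l2 -> l1 = l2.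
Proof.
  intros g_inj l1; induction l1 as [|a l1 IH]; intros [|b l2] E; try discriminate; auto.
  apply Nat.succ_inj, Cantor.to_nat_inj in E; injection E as Eab El.
  f_equal; auto.
Qed.

Definition encode_words : list (list bool) -> nat :=
  encode_list (encode_list Nat.b2n).

Lemma encode_words_inj L1 L2 : encode_words L1 = encode_words L2 -> L1 = L2.
Proof. apply encode_list_inj, encode_list_inj, Nat.b2n_inj. Qed.

Lemma agree_refl n x : agree n x x.
Proof. intros i _; reflexivity. Qed.

Lemma agree_sym n x y : agree n x y -> agree n y x.
Proof. intros H i Hi; symmetry; auto. Qed.

Lemma agree_trans n x y z : agree n x y -> agree n y z -> agree n x z.
Proof. intros H1 H2 i Hi; rewrite H1; auto. Qed.

Lemma agree_le m n x y : (m <= n)%nat -> agree n x y -> agree m x y.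
Proof. intros Hmn H i Hi; apply H; lia. Qed.

Definition prefix_determined (n : nat) (A : set Cantor) : Prop :=
  forall z y, agree n z y -> A z -> A y.

Lemma prefix_determined_not n A :
  prefix_determined n A -> prefix_determined n (fun z => ~ A z).
Proof. intros H z y Hzy Hz Hy; apply Hz, (H y z); auto using agree_sym. Qed.

Lemma prefix_determined_or m n A B :
  prefix_determined m A -> prefix_determined n B ->
  prefix_determined (Nat.max m n) (fun z => A z \/ B z).
Proof.
  intros HA HB z y Hzy [Hz|Hz]; [left; apply (HA z) | right; apply (HB z)]; auto;
    apply (agree_le _ (Nat.max m n)); auto; lia.
Qed.

Lemma prefix_determined_agree n x : prefix_determined n (agree n x).
Proof. intros z y Hzy Hxz; eapply agree_trans; eauto. Qed.

Lemma cantor_open_prefix_determined n A : prefix_determined n A -> cantor_open A.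
Proof. intros H z Hz; exists n; intros y Hzy; exact (H z y Hzy Hz). Qed.

Lemma rel_clopen_prefix_determined (X A : set Cantor) n :
  prefix_determined n A -> rel_clopen cantor_open X (fun z => X z /\ A z).
Proof.
  intros HA; split; split; try (intros z [Xz _]; exact Xz).
  - exists A; split; [exact (cantor_open_prefix_determined n A HA) | tauto].
  - exists A; split; [exact (cantor_open_prefix_determined n _ (prefix_determined_not n A HA)) | tauto].
Qed.

Definition cyl (w : list bool) : set Cantor :=
  fun z => forall i, (i < length w)%nat -> z i = nth i w false.

Definition word (x : Cantor) (n : nat) : list bool := map x (seq 0 n).

Lemma cyl_word x n z : cyl (word x n) z <-> agree n x z.
Proof.
  unfold cyl, word, agree; rewrite length_map, length_seq.
  split; intros H i Hi; specialize (H i Hi);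
    rewrite (nth_indep _ false (x 0%nat)), map_nth, seq_nth in *;
    auto; rewrite ?length_map, ?length_seq; auto.
Qed.

Definition cylinders (W : list (list bool)) : set Cantor :=
  fun z => exists w, In w W /\ cyl w z.

Definition cylinders_depth (W : list (list bool)) : nat :=
  list_max (map (@length bool) W).

Lemma prefix_determined_cylinders W : prefix_determined (cylinders_depth W) (cylinders W).
Proof.
  intros z y Hzy [w [Hw Hz]]; exists w; split; auto.
  assert (Hdepth : (length w <= cylinders_depth W)%nat).
  { apply (proj1 (Forall_forall _ _) (proj1 (list_max_le _ _) (le_n _))), in_map, Hw. }
  intros i Hi; rewrite <- Hzy by lia; auto.
Qed.

Definition closure {T} (op : set T -> Prop) (S : set T) : set T :=
  fun w => forall F, top_closed op F -> (forall v, S v -> F v) -> F w.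

Lemma closure_closed (Y : MetricSpace) (S : set Y) :
  top_closed (metric_open Y) (closure (metric_open Y) S).
Proof.
  intros w Hw; apply not_all_ex_not in Hw as [F Hw].
  apply imply_to_and in Hw as [HF Hw]; apply imply_to_and in Hw as [HSF Fw].
  destruct (HF w Fw) as [eps [Heps Hball]]; exists eps; split; auto.
  intros z Hz Hcl; exact (Hball z Hz (Hcl F HF HSF)).
Qed.

Lemma subset_closure {T} (op : set T -> Prop) (S : set T) y : S y -> closure op S y.
Proof. intros Sy F _ HSF; auto. Qed.

Definition remainder (Y : MetricSpace) (f : Cantor -> Y) (K : set Cantor) : set Y :=
  fun y => closure (metric_open Y) (img f K) y /\ ~ img f K y.

Definition clopen_LC (X : set Cantor) (Y : MetricSpace) (f : Cantor -> Y) : Prop :=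
  forall U, rel_clopen cantor_open X U -> LC_set (metric_open Y) (img f U).

Lemma rel_open_of_local (Y : MetricSpace) (Z S : set Y) :
  (forall y, S y -> Z y) ->
  (forall y, S y -> exists O, metric_open Y O /\ O y /\ forall w, O w -> Z w -> S w) ->
  rel_open (metric_open Y) Z S.
Proof.
  intros HSZ Hloc; split; auto.
  exists (fun z => exists O, metric_open Y O /\ O z /\ forall w, O w -> Z w -> S w); split.
  - intros z [O [HO [Oz HOS]]]; destruct (HO z Oz) as [eps [Heps Hball]].
    exists eps; split; auto; intros z' Hz'; exists O; auto.
  - intros y Zy; split; [apply Hloc|].
    intros [O [_ [Oy HOS]]]; auto.
Qed.

Section OpenOverRemainder.

Variables (X : set Cantor) (Y : MetricSpace) (f : Cantor -> Y) (A : set Cantor) (N : nat).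
Hypothesis f_clopen_LC : clopen_LC X Y f.
Hypothesis A_prefix : prefix_determined N A.

Let K := fun z => X z /\ A z.

Lemma remainder_points_near_image x n :
  X x -> exists O, metric_open Y O /\ O (f x) /\
    forall w, O w -> remainder Y f K w -> exists x', X x' /\ agree n x x' /\ f x' = w.
Proof.
  intros Xx.
  assert (HKN : rel_clopen cantor_open X (fun z => X z /\ (A z \/ agree n x z))).
  { eapply rel_clopen_prefix_determined, prefix_determined_or;
      eauto using prefix_determined_agree. }
  destruct (f_clopen_LC _ HKN) as [O [F [HO [HF HOF]]]].
  exists O; split; auto.
  split; [apply (proj1 (HOF (f x))); exists x; auto using agree_refl|].
  intros w Ow [Hcl Hnot].
  assert (Fw : F w).
  { apply Hcl; auto; intros v [x' [[Xx' Ax'] <-]]; apply HOF; exists x'; auto. }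
  destruct (proj2 (HOF w) (conj Ow Fw)) as [x' [[Xx' [Ax'|Hx']] <-]].
  - exfalso; apply Hnot; exists x'; split; [split|]; auto.
  - exists x'; auto.
Qed.

Lemma image_open_over_remainder (Z : set Y) :
  (forall y, Z y -> remainder Y f K y) ->
  forall U, rel_open cantor_open (preim X f Z) U -> rel_open (metric_open Y) Z (img f U).
Proof.
  intros HZ U [HU [V [HV HUV]]]; apply rel_open_of_local.
  - intros y [x [Ux <-]]; apply (HU x Ux).
  - intros y [x [Ux <-]]; destruct (HU x Ux) as [Xx _].
    destruct (HV x (proj1 (HUV x (HU x Ux)) Ux)) as [n Hn].
    destruct (remainder_points_near_image x n Xx) as [O [HO [Ofx Hnear]]].
    exists O; repeat split; auto.
    intros w Ow Zw; destruct (Hnear w Ow (HZ w Zw)) as [x' [Xx' [Hxx' <-]]].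
    exists x'; split; auto; apply HUV; [split|apply Hn]; auto.
Qed.

End OpenOverRemainder.

Lemma compact_in_cylinders_off_closed (K C : set Cantor) :
  top_compact cantor_open K -> top_closed cantor_open C -> (forall x, K x -> ~ C x) ->
  exists W, (forall x, K x -> cylinders W x) /\ (forall z, cylinders W z -> ~ C z).
Proof.
  intros HK HC HKC.
  assert (Hdepth : forall i : {x | K x}, exists n, forall z, agree n (proj1_sig i) z -> ~ C z).
  { intros [x Kx]; exact (HC x (HKC x Kx)). }
  apply choice in Hdepth as [depth Hdepth].
  destruct (HK _ (fun i => agree (depth i) (proj1_sig i))) as [l Hl].
  - intros i; exact (cantor_open_prefix_determined _ _ (prefix_determined_agree _ _)).
  - intros x Kx; exists (exist _ x Kx); apply agree_refl.
  - exists (map (fun i => word (proj1_sig i) (depth i)) l); split.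
    + intros x Kx; destruct (Hl x Kx) as [i [Hi Hx]].
      exists (word (proj1_sig i) (depth i)); split; [exact (in_map _ _ _ Hi)|].
      apply cyl_word; auto.
    + intros z [w [Hw Hz]]; apply in_map_iff in Hw as [i [<- _]].
      apply (Hdepth i), cyl_word, Hz.
Qed.

Definition off_cylinders (X : set Cantor) (W : list (list bool)) : set Cantor :=
  fun z => X z /\ ~ cylinders W z.

Lemma image_closed_off_remainders (X : set Cantor) (Y : MetricSpace) (f : Cantor -> Y)
    (Y0 : set Y) :
  (forall y, top_compact cantor_open (preim X f (fun z => z = y))) ->
  (forall W y, Y0 y -> ~ remainder Y f (off_cylinders X W) y) ->
  forall F, rel_closed cantor_open (preim X f Y0) F -> rel_closed (metric_open Y) Y0 (img f F).
Proof.
  intros Hfib HY0 F [HF [C [HC HFC]]]; split.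
  { intros y [x [Fx <-]]; apply (HF x Fx). }
  exists (closure (metric_open Y) (img f F)); split; [apply closure_closed|].
  intros y Y0y; split; [apply subset_closure|].
  intros Hcl; apply NNPP; intros Hnot.
  assert (Hfib_C : forall x, preim X f (fun z => z = y) x -> ~ C x).
  { intros x [Xx <-] Cx; apply Hnot; exists x; split; auto.
    apply HFC; auto; split; auto. }
  destruct (compact_in_cylinders_off_closed _ _ (Hfib y) HC Hfib_C) as [W [HfibW HWC]].
  apply (HY0 W y Y0y); split.
  - apply Hcl; [apply closure_closed|]; intros v [x [Fx <-]].
    apply subset_closure; exists x; split; auto.
    split; [apply (HF x Fx)|]; intros Wx; apply (HWC x Wx), HFC; auto.
  - intros [x [[Xx HWx] <-]]; apply HWx, HfibW; split; auto.
Qed.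

Theorem theorem1 (X : set Cantor) (Y : MetricSpace) (f : Cantor -> Y) :
  separable Y ->
  (forall y : Y, exists x, X x /\ f x = y) ->
  (forall U, rel_clopen cantor_open X U -> LC_set (metric_open Y) (img f U)) ->
  (forall y : Y, @top_compact Cantor cantor_open (preim X f (fun z : Y => z = y))) ->
  exists Ys : nat -> set Y,
    (forall y : Y, exists n, Ys n y) /\
    (forall n, (1 <= n)%nat -> forall U,
        rel_open cantor_open (preim X f (Ys n)) U ->
        rel_open (metric_open Y) (Ys n) (img f U)) /\
    (forall F,
        rel_closed cantor_open (preim X f (Ys 0%nat)) F ->
        rel_closed (metric_open Y) (Ys 0%nat) (img f F)).
Proof.
  intros _ _ f_clopen_LC Hfib.
  set (Z := fun m y => exists W, encode_words W = m /\ remainder Y f (off_cylinders X W) y).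
  exists (fun n => match n with O => fun y => forall m, ~ Z m y | S m => Z m end).
  split; [|split].
  - intros y; destruct (classic (exists m, Z m y)) as [[m Hm]|Hnone].
    + exists (S m); exact Hm.
    + exists O; intros m Hm; eauto.
  - intros [|m] Hm; [lia|].
    assert (Hcode : exists W, forall W', encode_words W' = m -> W' = W).
    { destruct (classic (exists W, encode_words W = m)) as [[W <-]|Hnone].
      - exists W; intros W'; apply encode_words_inj.
      - exists nil; intros W' HW'; exfalso; eauto. }
    destruct Hcode as [W HW].
    apply (image_open_over_remainder X Y f _ _ f_clopen_LC
             (prefix_determined_not _ _ (prefix_determined_cylinders W))).
    intros y [W' [HW' Hy]]; rewrite <- (HW W' HW'); exact Hy.
  - apply image_closed_off_remainders; auto.
    intros W y Y0y Hy; apply (Y0y (encode_words W)); exists W; auto.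
Qed.
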